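(* (i) If $A$ and $B$ are approximately semi-amenable Banach algebras, then $A\oplus B$ is approximately semi-amenable. (ii) If $A$ and $B$ are boundedly approximately semi-amenable (respectively, boundedly approximately semi-contractible) Banach algebras, and each of $A$ and $B$ has a central multiplier-bounded approximate identity, then $A\oplus B$ is boundedly approximately semi-amenable (respectively, boundedly approximately semi-contractible).
   Context: $A\oplus B$ is the direct sum Banach algebra with coordinatewise operations and norm, e.g., $\|(a,b)\|=\|a\|+\|b\|$. A central multiplier-bounded approximate identity of $A$ is a net $(e_\alpha)$ in the centre of $A$ with $e_\alpha a\to a$ for all $a\in A$ and a constant $M$ with $\|e_\alpha a\|\le M\|a\|$ for all $\alpha$ and $a$. For a Banach algebra $C$ and Banach $C$-bimodule $Y$, a derivation is a linear $D:C\to Y$ with $D(ab)=a\cdot D(b)+D(a)\cdot b$; for $\xi,\eta\in Y$, $\mathrm{ad}_{\xi,\eta}(a)=a\cdot\xi-\eta\cdot a$. A continuous derivation $D:C\to Y$ is approximately semi-inner if there are nets $(\xi_i),(\eta_i)$ in $Y$ with $D(a)=\lim_i\mathrm{ad}_{\xi_i,\eta_i}(a)$ in norm for all $a\in C$, and boundedly approximately semi-inner if in addition $\sup_i\|\mathrm{ad}_{\xi_i,\eta_i}\|<\infty$. $C$ is approximately semi-amenable (resp. boundedly approximately semi-amenable) if for every Banach $C$-bimodule $X$ every continuous derivation $C\to X^*$ is approximately semi-inner (resp. boundedly approximately semi-inner), where $X^*$ has the dual module structure $\langle a\cdot f,x\rangle=\langle f,x\cdot a\rangle$, $\langle f\cdot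 a,x\rangle=\langle f,a\cdot x\rangle$; $C$ is boundedly approximately semi-contractible if for every Banach $C$-bimodule $Y$ every continuous derivation $C\to Y$ is boundedly approximately semi-inner. *)

From mathcomp Require Import all_boot all_algebra.
From mathcomp Require Import reals complex.
Import GRing.Theory Num.Theory.
Set Implicit Arguments.
Unset Strict Implicit.
Unset Printing Implicit Defensive.
Local Open Scope ring_scope.
Local Open Scope complex_scope.

Definition directed (I : Type) (le : I -> I -> Prop) : Prop :=
  [/\ inhabited I, (forall i, le i i),
      (forall i j k, le i j -> le j k -> le i k) &
      (forall i j, exists k, le i k /\ le j k)].

Definition is_norm (R : realType) (V : lmodType R[i]) (nrm : V -> R) : Prop :=
  [/\ (forall x, 0 <= nrm x), (forall x, nrm x = 0 -> x = 0),
      (forall x y, nrm (x + y) <= nrm x + nrm y) &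
      (forall (k : R[i]) x, (nrm (k *: x))%:C = `|k| * (nrm x)%:C)].

Definition complete_norm (R : realType) (V : lmodType R[i]) (nrm : V -> R) : Prop :=
  forall u : nat -> V,
    (forall e : R, 0 < e -> exists N : nat, forall m n : nat,
        (N <= m)%N -> (N <= n)%N -> nrm (u m - u n) < e) ->
    exists l : V, forall e : R, 0 < e -> exists N : nat, forall n : nat,
        (N <= n)%N -> nrm (u n - l) < e.

Definition banach_space (R : realType) (V : lmodType R[i]) (nrm : V -> R) : Prop :=
  is_norm nrm /\ complete_norm nrm.

Definition banach_algebra (R : realType) (A : lmodType R[i])
    (mul : A -> A -> A) (nrm : A -> R) : Prop :=
  [/\ banach_space nrm,
      (forall a b c, mul a (mul b c) = mul (mul a b) c),
      (forall a b c, mul (a + b) c = mul a c + mul b c) /\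
      (forall a b c, mul a (b + c) = mul a b + mul a c),
      (forall (k : R[i]) a b, mul (k *: a) b = k *: mul a b) /\
      (forall (k : R[i]) a b, mul a (k *: b) = k *: mul a b) &
      (forall a b, nrm (mul a b) <= nrm a * nrm b)].

Definition dsum_mul (R : realType) (A B : lmodType R[i])
    (mulA : A -> A -> A) (mulB : B -> B -> B) : (A * B)%type -> (A * B)%type -> (A * B)%type :=
  fun p q => (mulA p.1 q.1, mulB p.2 q.2).

Definition dsum_norm (R : realType) (A B : lmodType R[i])
    (nrmA : A -> R) (nrmB : B -> R) : (A * B)%type -> R :=
  fun p => nrmA p.1 + nrmB p.2.

(* l a x = a . x ,  r x a = x . a *)
Definition banach_bimodule (R : realType) (A : lmodType R[i])
    (mul : A -> A -> A) (nrmA : A -> R)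
    (Y : lmodType R[i]) (nrmY : Y -> R)
    (l : A -> Y -> Y) (r : Y -> A -> Y) : Prop :=
  [/\ banach_space nrmY,
      (forall (k : R[i]) a x y, l a (k *: x + y) = k *: l a x + l a y) /\
      (forall (k : R[i]) a b x, l (k *: a + b) x = k *: l a x + l b x),
      (forall (k : R[i]) a x y, r (k *: x + y) a = k *: r x a + r y a) /\
      (forall (k : R[i]) a b x, r x (k *: a + b) = k *: r x a + r x b),
      [/\ (forall a b x, l (mul a b) x = l a (l b x)),
          (forall a b x, r x (mul a b) = r (r x a) b) &
          (forall a b x, r (l a x) b = l a (r x b))] &
      (forall a x, nrmY (l a x) <= nrmA a * nrmY x) /\
      (forall a x, nrmY (r x a) <= nrmY x * nrmA a)].

Definition cont_derivation (R : realType) (A : lmodType R[i])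
    (mul : A -> A -> A) (nrmA : A -> R)
    (Y : lmodType R[i]) (nrmY : Y -> R)
    (l : A -> Y -> Y) (r : Y -> A -> Y) (D : A -> Y) : Prop :=
  [/\ (forall (k : R[i]) a b, D (k *: a + b) = k *: D a + D b),
      (forall a b, D (mul a b) = l a (D b) + r (D a) b) &
      (exists M : R, forall a, nrmY (D a) <= M * nrmA a)].

Definition ad (R : realType) (A Y : lmodType R[i])
    (l : A -> Y -> Y) (r : Y -> A -> Y) (xi eta : Y) : A -> Y :=
  fun a => l a xi - r eta a.

Definition bdd_approx_semi_inner (R : realType) (A : lmodType R[i])
    (nrmA : A -> R) (Y : lmodType R[i]) (nrmY : Y -> R)
    (l : A -> Y -> Y) (r : Y -> A -> Y) (D : A -> Y) : Prop :=
  exists (I : Type) (le : I -> I -> Prop) (xi eta : I -> Y),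
    [/\ directed le,
        (forall a, forall e : R, 0 < e -> exists i0, forall i, le i0 i ->
            nrmY (D a - ad l r (xi i) (eta i) a) < e) &
        (exists M : R, forall i a, nrmY (ad l r (xi i) (eta i) a) <= M * nrmA a)].

Definition bdd_approx_semi_contractible (R : realType) (A : lmodType R[i])
    (mul : A -> A -> A) (nrmA : A -> R) : Prop :=
  forall (Y : lmodType R[i]) (nrmY : Y -> R) (l : A -> Y -> Y) (r : Y -> A -> Y),
    banach_bimodule mul nrmA nrmY l r ->
    forall D : A -> Y, cont_derivation mul nrmA nrmY l r D ->
      bdd_approx_semi_inner nrmA nrmY l r D.

(* The dual X^* is represented by its elements: bounded linear functionals
   f : X -> C. *)
Definition in_dual (R : realType) (X : lmodType R[i]) (nrmX : X -> R)
    (f : X -> R[i]) : Prop :=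
  (forall (k : R[i]) x y, f (k *: x + y) = k * f x + f y) /\
  (exists M : R, forall x, `|f x| <= (M * nrmX x)%:C).

Definition dual_norm_le (R : realType) (X : lmodType R[i]) (nrmX : X -> R)
    (f : X -> R[i]) (c : R) : Prop :=
  forall x, `|f x| <= (c * nrmX x)%:C.

Definition dual_lact (R : realType) (A X : lmodType R[i]) (r : X -> A -> X)
    (a : A) (f : X -> R[i]) : X -> R[i] := fun x => f (r x a).

Definition dual_ract (R : realType) (A X : lmodType R[i]) (l : A -> X -> X)
    (f : X -> R[i]) (a : A) : X -> R[i] := fun x => f (l a x).

Definition cont_dual_derivation (R : realType) (A : lmodType R[i])
    (mul : A -> A -> A) (nrmA : A -> R)
    (X : lmodType R[i]) (nrmX : X -> R)
    (l : A -> X -> X) (r : X -> A -> X) (D : A -> X -> R[i]) : Prop :=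
  [/\ (forall a, in_dual nrmX (D a)),
      (forall (k : R[i]) a b x, D (k *: a + b) x = k * D a x + D b x),
      (forall a b x, D (mul a b) x = dual_lact r a (D b) x + dual_ract l (D a) b x) &
      (exists M : R, forall a, dual_norm_le nrmX (D a) (M * nrmA a))].

Definition dual_ad (R : realType) (A X : lmodType R[i])
    (l : A -> X -> X) (r : X -> A -> X) (xi eta : X -> R[i]) (a : A) : X -> R[i] :=
  fun x => dual_lact r a xi x - dual_ract l eta a x.

Definition dual_approx_semi_inner (R : realType) (A : lmodType R[i])
    (nrmA : A -> R) (X : lmodType R[i]) (nrmX : X -> R)
    (l : A -> X -> X) (r : X -> A -> X) (D : A -> X -> R[i]) : Prop :=
  exists (I : Type) (le : I -> I -> Prop) (xi eta : I -> X -> R[i]),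
    [/\ directed le,
        (forall i, in_dual nrmX (xi i) /\ in_dual nrmX (eta i)) &
        (forall a, forall e : R, 0 < e -> exists i0, forall i, le i0 i ->
            dual_norm_le nrmX (fun x => D a x - dual_ad l r (xi i) (eta i) a x) e)].

Definition dual_bdd_approx_semi_inner (R : realType) (A : lmodType R[i])
    (nrmA : A -> R) (X : lmodType R[i]) (nrmX : X -> R)
    (l : A -> X -> X) (r : X -> A -> X) (D : A -> X -> R[i]) : Prop :=
  exists (I : Type) (le : I -> I -> Prop) (xi eta : I -> X -> R[i]),
    [/\ directed le,
        (forall i, in_dual nrmX (xi i) /\ in_dual nrmX (eta i)),
        (forall a, forall e : R, 0 < e -> exists i0, forall i, le i0 i ->
            dual_norm_le nrmX (fun x => D a x - dual_ad l r (xi i) (eta i) a x) e) &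
        (exists M : R, forall i a,
            dual_norm_le nrmX (dual_ad l r (xi i) (eta i) a) (M * nrmA a))].

Definition approx_semi_amenable (R : realType) (A : lmodType R[i])
    (mul : A -> A -> A) (nrmA : A -> R) : Prop :=
  forall (X : lmodType R[i]) (nrmX : X -> R) (l : A -> X -> X) (r : X -> A -> X),
    banach_bimodule mul nrmA nrmX l r ->
    forall D : A -> X -> R[i], cont_dual_derivation mul nrmA nrmX l r D ->
      dual_approx_semi_inner nrmA nrmX l r D.

Definition bdd_approx_semi_amenable (R : realType) (A : lmodType R[i])
    (mul : A -> A -> A) (nrmA : A -> R) : Prop :=
  forall (X : lmodType R[i]) (nrmX : X -> R) (l : A -> X -> X) (r : X -> A -> X),
    banach_bimodule mul nrmA nrmX l r ->
    forall D : A -> X -> R[i], cont_dual_derivation mul nrmA nrmX l r D ->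
      dual_bdd_approx_semi_inner nrmA nrmX l r D.

Definition central_mb_approx_identity (R : realType) (A : lmodType R[i])
    (mul : A -> A -> A) (nrm : A -> R) : Prop :=
  exists (I : Type) (le : I -> I -> Prop) (e : I -> A),
    [/\ directed le,
        (forall i a, mul (e i) a = mul a (e i)),
        (forall a, forall eps : R, 0 < eps -> exists i0, forall i, le i0 i ->
            nrm (mul (e i) a - a) < eps) &
        (exists M : R, forall i a, nrm (mul (e i) a) <= M * nrm a)].

(* The restriction of a derivation D on A (+) B to each summand is
   approximately semi-inner; what has to be arranged is that the functionals
   implementing it on one summand are blind to the other.  For (ii) a central
   approximate identity e of A does this: ad_{e.xi, eta.e}(c) = ad_{xi,eta}(c_1 e)
   only sees the A-component, is bounded when e is multiplier-bounded, and
   D(c_1 e) is close to D(c_1).  For (i) there is no approximate identity in A,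
   but there is one in A**: approximate semi-amenability applied to the
   derivation a |-> (g |-> g a) into the dual of A* (A acting on A* through left
   multiplication only) gives F in A** with F(g.a) close to g(a).  Replacing xi by
   x |-> F(a |-> xi(x.a)) kills X.B and moves xi only slightly on X.a; the
   left-handed version comes from the opposite algebra.  Bounded approximate
   semi-amenability reduces to (ii) applied to the dual bimodule X*, which is a
   Banach bimodule for the dual norm. *)

From HB Require Import structures.
From mathcomp Require Import all_boot all_algebra reals complex.
From mathcomp Require Import all_classical topology normedtype.
From mathcomp Require Import lra ring.

Import order.Order.TTheory GRing.Theory Num.Theory numFieldNormedType.Exports.
Import ComplexField.Normc.

Set Implicit Arguments.
Unset Strict Implicit.
Unset Printing Implicit Defensive.

Local Open Scope ring_scope.
Local Open Scope complex_scope.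

Section RealCompleteness.
Local Open Scope classical_set_scope.

Lemma real_cauchy_cvg (R : realType) (u : nat -> R) :
  (forall e : R, 0 < e -> exists N, forall m n,
      (N <= m)%N -> (N <= n)%N -> `|u m - u n| < e) ->
  exists l, forall e : R, 0 < e -> exists N, forall n, (N <= n)%N -> `|u n - l| < e.
Proof.
move=> u_cauchy.
have : cauchy (u @ \oo).
  apply: cauchy_exP => e e0; have [N uN] := u_cauchy e e0.
  by exists (u N), N => // n /= Nn; rewrite /ball /= uN.
move=> /cauchy_cvg /cvg_ex [l ul]; exists l => e e0.
have [N _ uNl] := (cvgrPdist_lt _ _).1 ul e e0.
by exists N => n Nn; rewrite distrC uNl.
Qed.

End RealCompleteness.

Section ComplexModulus.
Variable R : realType.
Implicit Types (z w : R[i]) (c e : R).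

Lemma normc_ge0 z : 0 <= normc z.
Proof. by case: z => a b; apply: sqrtr_ge0. Qed.

Lemma normr_normc z : `|z| = (normc z : R)%:C.
Proof. by case: z => a b; rewrite normc_def. Qed.

Lemma ler_normc z c : (`|z| <= c%:C) = (normc z <= c).
Proof. by rewrite normr_normc lecR. Qed.

Lemma normcB z w : normc (z - w) <= normc z + normc w.
Proof. by rewrite -(normcN w) le_normcD. Qed.

Lemma normc_le_eps z : (forall e, 0 < e -> normc z <= e) -> z = 0.
Proof.
move=> small; apply: eq0_normc; apply/eqP; rewrite eq_le normc_ge0 andbT.
by apply/ler_addgt0Pl => e e0; rewrite addr0 small.
Qed.

Lemma normc_Re z : `|complex.Re z| <= normc z.
Proof. by case: z => a b; rewrite /= -sqrtr_sqr ler_wsqrtr // lerDl sqr_ge0. Qed.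

Lemma normc_Im z : `|complex.Im z| <= normc z.
Proof. by case: z => a b; rewrite /= -sqrtr_sqr ler_wsqrtr // lerDr sqr_ge0. Qed.

Lemma normc_le_ReIm z : normc z <= `|complex.Re z| + `|complex.Im z|.
Proof.
case: z => a b /=; rewrite -[X in _ <= X]ger0_norm ?addr_ge0 // -sqrtr_sqr.
apply: ler_wsqrtr; rewrite sqrrD -[a ^+ 2]real_normK ?num_real //.
rewrite -[b ^+ 2]real_normK ?num_real // addrAC lerDl.
by rewrite mulrn_wge0 // mulr_ge0.
Qed.

Definition cvgc (u : nat -> R[i]) l :=
  forall e, 0 < e -> exists N, forall n, (N <= n)%N -> normc (u n - l) < e.

Lemma normc_cauchy_cvg (u : nat -> R[i]) :
  (forall e, 0 < e -> exists N, forall m n,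
      (N <= m)%N -> (N <= n)%N -> normc (u m - u n) < e) ->
  exists l, cvgc u l.
Proof.
move=> u_cauchy.
have [a Ra] : exists a, forall e, 0 < e -> exists N, forall n,
    (N <= n)%N -> `|complex.Re (u n) - a| < e.
  apply: real_cauchy_cvg => e /u_cauchy [N uN]; exists N => m n Nm Nn.
  by rewrite -raddfB; apply: le_lt_trans (normc_Re _) (uN m n Nm Nn).
have [b Ib] : exists b, forall e, 0 < e -> exists N, forall n,
    (N <= n)%N -> `|complex.Im (u n) - b| < e.
  apply: real_cauchy_cvg => e /u_cauchy [N uN]; exists N => m n Nm Nn.
  by rewrite -raddfB; apply: le_lt_trans (normc_Im _) (uN m n Nm Nn).
exists (a +i* b) => e e0.
have [Na Ha] := Ra _ (divr_gt0 e0 (ltr0Sn _ 1)).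
have [Nb Hb] := Ib _ (divr_gt0 e0 (ltr0Sn _ 1)).
exists (maxn Na Nb) => n; rewrite geq_max => /andP[Nan Nbn].
apply: le_lt_trans (normc_le_ReIm _) _; rewrite [e]splitr.
by rewrite !raddfB /= ltrD ?Ha ?Hb.
Qed.

Lemma cvgc_le (u : nat -> R[i]) l c :
  cvgc u l -> (exists N, forall n, (N <= n)%N -> normc (u n) <= c) -> normc l <= c.
Proof.
move=> ul [N uc]; apply/ler_addgt0Pl => e /ul [M ulM].
have := ulM _ (leq_maxr N M); have := uc _ (leq_maxl N M).
have := normcB (u (maxn N M)) (u (maxn N M) - l); rewrite opprB addrC subrK.
lra.
Qed.

Lemma cvgc_linear k (a b c : nat -> R[i]) A B C :
  cvgc a A -> cvgc b B -> cvgc c C -> (forall n, c n = k * a n + b n) ->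
  C = k * A + B.
Proof.
move=> aA bB cC cE; apply/eqP; rewrite -subr_eq0; apply/eqP.
apply: normc_le_eps => e e0.
have e3 : 0 < e / 3%:R by rewrite divr_gt0.
have ek : 0 < e / 3%:R / (normc k + 1) by rewrite divr_gt0 // ltr_wpDl ?normc_ge0.
have [Na Ha] := aA _ ek; have [Nb Hb] := bB _ e3; have [Nc Hc] := cC _ e3.
pose n := maxn Na (maxn Nb Nc).
have /Ha an : (Na <= n)%N by rewrite leq_maxl.
have /Hb bn : (Nb <= n)%N by rewrite leq_max leq_maxl orbT.
have /Hc cn : (Nc <= n)%N by rewrite leq_max leq_maxr orbT.
have -> : C - (k * A + B) = - (c n - C) + k * (a n - A) + (b n - B).
  by rewrite cE; ring.
have kan : normc k * normc (a n - A) <= e / 3%:R.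
  apply: le_trans (ler_wpM2l (normc_ge0 k) (ltW an)) _.
  rewrite mulrCA ger_pMr ?divr_gt0 // ler_pdivrMr ?ltr_wpDl ?normc_ge0 //.
  by rewrite mul1r lerDl.
apply: le_trans (le_normcD _ _) _; apply: le_trans (lerD (le_normcD _ _) (lexx _)) _.
rewrite normcN normcM; lra.
Qed.

End ComplexModulus.

Section NormedSpace.
Variables (R : realType) (V : lmodType R[i]) (nrm : V -> R).
Hypothesis nrm_norm : is_norm nrm.

Lemma nrm_ge0 x : 0 <= nrm x.
Proof. by case: nrm_norm. Qed.

Lemma nrmZ k x : nrm (k *: x) = normc k * nrm x.
Proof.
by case: nrm_norm => _ _ _ /(_ k x); rewrite normr_normc -rmorphM => -[].
Qed.

Lemma nrm0 : nrm 0 = 0.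
Proof. by rewrite -(scale0r (0 : V)) nrmZ normc0 mul0r. Qed.

Lemma nrmN x : nrm (- x) = nrm x.
Proof. by rewrite -scaleN1r nrmZ normcN normc1 mul1r. Qed.

Lemma nrmD x y : nrm (x + y) <= nrm x + nrm y.
Proof. by case: nrm_norm. Qed.

End NormedSpace.

Section BoundedFunctionals.
Variables (R : realType) (V : lmodType R[i]) (nrm : V -> R).
Implicit Types (f g : V -> R[i]) (c M : R).

Lemma dual_norm_leP f c :
  dual_norm_le nrm f c <-> forall x, normc (f x) <= c * nrm x.
Proof. by split=> fc x; [rewrite -ler_normc | rewrite ler_normc]. Qed.

Lemma bounded_in_dual f M :
  (forall (k : R[i]) x y, f (k *: x + y) = k * f x + f y) ->
  (forall x, normc (f x) <= M * nrm x) -> in_dual nrm f.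
Proof. by move=> f_lin fM; split=> //; exists M => x; rewrite ler_normc. Qed.

Section DualVector.
Variable f : V -> R[i].
Hypothesis f_dual : in_dual nrm f.

Lemma dualf_linear (k : R[i]) x y : f (k *: x + y) = k * f x + f y.
Proof. by case: f_dual. Qed.

Lemma dualf0 : f 0 = 0.
Proof.
have := dualf_linear 1 0 0; rewrite scale1r addr0 mul1r => f0.
by apply: (addrI (f 0)); rewrite addr0 -f0.
Qed.

Lemma dualfB x y : f (x - y) = f x - f y.
Proof. by rewrite addrC -scaleN1r dualf_linear mulN1r addrC. Qed.

End DualVector.

Lemma in_dual0 : in_dual nrm (fun _ => 0).
Proof.
by apply: (@bounded_in_dual _ 0) => [k x y|x]; rewrite ?mulr0 ?addr0 ?normc0 ?mul0r.
Qed.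

Lemma in_dualD f g : in_dual nrm f -> in_dual nrm g -> in_dual nrm (fun x => f x + g x).
Proof.
move=> f_dual g_dual; have [_ [Mf /dual_norm_leP Mf_f]] := f_dual.
have [_ [Mg /dual_norm_leP Mg_g]] := g_dual.
apply: (@bounded_in_dual _ (Mf + Mg)) => [k x y|x].
  by rewrite !dualf_linear // mulrDr addrACA.
by rewrite mulrDl; apply: le_trans (le_normcD _ _) (lerD (Mf_f x) (Mg_g x)).
Qed.

Lemma in_dualZ (k : R[i]) f : in_dual nrm f -> in_dual nrm (fun x => k * f x).
Proof.
move=> f_dual; have [_ [M /dual_norm_leP Mf]] := f_dual.
apply: (@bounded_in_dual _ (normc k * M)) => [a x y|x].
  by rewrite dualf_linear // mulrDr mulrCA.
by rewrite normcM -mulrA ler_wpM2l ?normc_ge0.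
Qed.

Lemma in_dualN f : in_dual nrm f -> in_dual nrm (fun x => - f x).
Proof.
by move=> /(in_dualZ (-1)); congr in_dual; apply: funext => x; rewrite mulN1r.
Qed.

Hypothesis nrm_norm : is_norm nrm.

Lemma dual_norm_le_trans f c c' :
  c <= c' -> dual_norm_le nrm f c -> dual_norm_le nrm f c'.
Proof.
move=> cc' /dual_norm_leP fc; apply/dual_norm_leP => x.
by apply: le_trans (fc x) _; rewrite ler_wpM2r ?(nrm_ge0 nrm_norm).
Qed.

Lemma in_dual_bound f :
  in_dual nrm f -> exists2 M, 0 <= M & forall x, normc (f x) <= M * nrm x.
Proof.
move=> [_ [M /dual_norm_leP fM]]; exists `|M| => // x.
by apply: le_trans (fM x) _; rewrite ler_wpM2r ?(nrm_ge0 nrm_norm) ?ler_norm.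
Qed.

End BoundedFunctionals.

Lemma in_dual_comp (R : realType) (V W : lmodType R[i]) (nrm : V -> R)
    (nrmW : W -> R) (T : W -> V) (K : R) (f : V -> R[i]) :
  is_norm nrm -> in_dual nrm f ->
  (forall (k : R[i]) x y, T (k *: x + y) = k *: T x + T y) ->
  (forall x, nrm (T x) <= K * nrmW x) -> in_dual nrmW (fun x => f (T x)).
Proof.
move=> nrm_norm f_dual T_lin TK; have [M M0 fM] := in_dual_bound nrm_norm f_dual.
apply: (bounded_in_dual (M := M * K)) => [k x y|x].
  by rewrite T_lin (dualf_linear f_dual).
by apply: le_trans (fM _) _; rewrite -mulrA ler_wpM2l.
Qed.

Section DualSpace.
Variables (R : realType) (V : lmodType R[i]) (nrm : V -> R).

Record dualT := DualT { dfun :> V -> R[i]; dfunP : in_dual nrm dfun }.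

HB.instance Definition _ := gen_eqMixin dualT.
HB.instance Definition _ := gen_choiceMixin dualT.

Lemma dual_ext (f g : dualT) : (forall x, f x = g x) -> f = g.
Proof.
case: f g => [f f_dual] [g g_dual] /= fg.
have fgE : f = g by apply: funext.
by subst g; congr DualT; apply: Prop_irrelevance.
Qed.

Definition dual_zero := DualT (in_dual0 nrm).
Definition dual_add (f g : dualT) := DualT (in_dualD (dfunP f) (dfunP g)).
Definition dual_opp (f : dualT) := DualT (in_dualN (dfunP f)).
Definition dual_scale (k : R[i]) (f : dualT) := DualT (in_dualZ k (dfunP f)).

Lemma dual_addA : associative dual_add.
Proof. by move=> f g h; apply: dual_ext => x /=; rewrite addrA. Qed.

Lemma dual_addC : commutative dual_add.
Proof. by move=> f g; apply: dual_ext => x /=; rewrite addrC. Qed.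

Lemma dual_add0 : left_id dual_zero dual_add.
Proof. by move=> f; apply: dual_ext => x /=; rewrite add0r. Qed.

Lemma dual_addN : left_inverse dual_zero dual_opp dual_add.
Proof. by move=> f; apply: dual_ext => x /=; rewrite addNr. Qed.

HB.instance Definition _ :=
  GRing.isZmodule.Build dualT dual_addA dual_addC dual_add0 dual_addN.

Lemma dual_scaleA a b f : dual_scale a (dual_scale b f) = dual_scale (a * b) f.
Proof. by apply: dual_ext => x /=; rewrite mulrA. Qed.

Lemma dual_scale1 : left_id 1 dual_scale.
Proof. by move=> f; apply: dual_ext => x /=; rewrite mul1r. Qed.

Lemma dual_scaleDr : right_distributive dual_scale +%R.
Proof. by move=> a f g; apply: dual_ext => x /=; rewrite mulrDr. Qed.

Lemma dual_scaleDl f : {morph dual_scale^~ f : a b / a + b}.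
Proof. by move=> a b; apply: dual_ext => x /=; rewrite mulrDl. Qed.

HB.instance Definition _ := GRing.Zmodule_isLmodule.Build R[i] dualT
  dual_scaleA dual_scale1 dual_scaleDr dual_scaleDl.

Lemma dualEB (f g : dualT) x : (f - g) x = f x - g x. Proof. by []. Qed.
Lemma dualEZ k (f : dualT) x : (k *: f) x = k * f x. Proof. by []. Qed.

Definition dual_norm (f : dualT) : R :=
  inf (fun M => 0 <= M /\ dual_norm_le nrm f M).

Hypothesis nrm_norm : is_norm nrm.
Local Notation nrm_ge0 := (nrm_ge0 nrm_norm).

Lemma dual_norm_bounds (f : dualT) : has_inf (fun M => 0 <= M /\ dual_norm_le nrm f M).
Proof.
have [M M0 fM] := in_dual_bound nrm_norm (dfunP f).
by split; [exists M; split=> //; apply/dual_norm_leP | exists 0 => N []].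
Qed.

Lemma dual_norm_ge0 (f : dualT) : 0 <= dual_norm f.
Proof. by apply: lb_le_inf => [|N []]; case: (dual_norm_bounds f). Qed.

Lemma dual_norm_min (f : dualT) M : 0 <= M -> dual_norm_le nrm f M -> dual_norm f <= M.
Proof. by move=> M0 fM; apply: ge_inf; [case: (dual_norm_bounds f) | split]. Qed.

Lemma normc_dual_le (f : dualT) x : normc (f x) <= dual_norm f * nrm x.
Proof.
apply/ler_addgt0Pl => e e0.
have e' : 0 < e / (nrm x + 1) by rewrite divr_gt0 // ltr_wpDl ?nrm_ge0.
have [M [M0 /dual_norm_leP fM] ltM] := inf_adherent e' (dual_norm_bounds f).
apply: le_trans (fM x) _; rewrite addrC.
apply: le_trans (ler_wpM2r (nrm_ge0 x) (ltW ltM)) _.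
rewrite mulrDl lerD2l -mulrA ger_pMr // mulrC ler_pdivrMr ?ltr_wpDl ?nrm_ge0 //.
by rewrite mul1r lerDl.
Qed.

Lemma dual_norm_is_norm : is_norm dual_norm.
Proof.
split.
- exact: dual_norm_ge0.
- move=> f f0; apply: dual_ext => x; apply: eq0_normc; apply/eqP.
  by rewrite eq_le normc_ge0 andbT (le_trans (normc_dual_le f x)) // f0 mul0r.
- move=> f g; apply: dual_norm_min; first by rewrite addr_ge0 ?dual_norm_ge0.
  apply/dual_norm_leP => x; apply: le_trans (le_normcD _ _) _.
  by rewrite mulrDl lerD ?normc_dual_le.
- move=> k f; rewrite normr_normc -rmorphM; congr (_%:C); apply/eqP.
  rewrite eq_le; apply/andP; split.
    apply: dual_norm_min; first by rewrite mulr_ge0 ?normc_ge0 ?dual_norm_ge0.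
    apply/dual_norm_leP => x.
    by rewrite dualEZ normcM -mulrA ler_wpM2l ?normc_ge0 ?normc_dual_le.
  have [->|k0] := eqVneq k 0; first by rewrite normc0 mul0r dual_norm_ge0.
  have nk0 : 0 < normc k.
    by rewrite lt_def normc_ge0 andbT; apply: contra k0 => /eqP /eq0_normc ->.
  rewrite -ler_pdivlMl //; apply: dual_norm_min.
    by rewrite mulr_ge0 ?invr_ge0 ?normc_ge0 ?dual_norm_ge0.
  apply/dual_norm_leP => x; rewrite -mulrA ler_pdivlMl // -normcM.
  by rewrite -dualEZ normc_dual_le.
Qed.

Lemma dual_norm_complete : complete_norm dual_norm.
Proof.
have [_ _ dual_normD _] := dual_norm_is_norm.
move=> u u_cauchy.
have u_pointwise x : exists l, cvgc (fun n => u n x) l.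
  apply: normc_cauchy_cvg => e e0.
  have [N uN] := u_cauchy _ (divr_gt0 e0 (ltr_wpDl (nrm_ge0 x) ltr01)).
  exists N => m n Nm Nn; rewrite -dualEB.
  apply: le_lt_trans (normc_dual_le _ x) _.
  have := uN m n Nm Nn; rewrite ltr_pdivlMr ?ltr_wpDl ?nrm_ge0 //.
  by apply: le_lt_trans; rewrite ler_wpM2l ?dual_norm_ge0 ?lerDl.
have [L uL] := choice u_pointwise.
have L_lin (k : R[i]) x y : L (k *: x + y) = k * L x + L y.
  by apply: (cvgc_linear (uL x) (uL y) (uL _)) => n; exact: (dualf_linear (dfunP (u n))).
have [N1 uN1] := u_cauchy 1 ltr01.
have L_bnd x : normc (L x) <= (dual_norm (u N1) + 1) * nrm x.
  apply: (cvgc_le (uL x)); exists N1 => n N1n.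
  apply: le_trans (normc_dual_le _ x) (ler_wpM2r (nrm_ge0 x) _).
  have := dual_normD (u n - u N1) (u N1); rewrite subrK.
  have := uN1 n N1 N1n (leqnn _); lra.
exists (DualT (bounded_in_dual L_lin L_bnd)) => e e0.
have [N uN] := u_cauchy _ (divr_gt0 e0 (ltr0Sn _ 1)); exists N => n Nn.
apply: (@le_lt_trans _ _ (e / 2)); last by rewrite ltr_pdivrMr // ltr_pMr // ltr1n.
apply: dual_norm_min; first by rewrite ltW ?divr_gt0.
apply/dual_norm_leP => x; rewrite dualEB /=.
have unL : cvgc (fun m => u n x - u m x) (u n x - L x).
  move=> e' /(uL x) [M uM]; exists M => m Mm.
  have -> : u n x - u m x - (u n x - L x) = - (u m x - L x) by ring.
  by rewrite normcN uM.
apply: (cvgc_le unL); exists N => m Nm; rewrite -dualEB.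
by apply: le_trans (normc_dual_le _ x) _; rewrite ler_wpM2r ?nrm_ge0 ?ltW ?uN.
Qed.

Lemma dual_banach : banach_space dual_norm.
Proof. by split; [exact: dual_norm_is_norm | exact: dual_norm_complete]. Qed.

End DualSpace.

Arguments dual_norm {R V} nrm f.

Section Nets.
Variables (I : Type) (le : I -> I -> Prop).
Hypothesis le_directed : directed le.

Lemma directed_refl i : le i i.
Proof. by case: le_directed. Qed.

Lemma eventually_all (T : eqType) (P : T -> I -> Prop) :
  (forall t, exists i0, forall i, le i0 i -> P t i) ->
  forall s : seq T, exists i0, forall i, le i0 i -> forall t, t \in s -> P t i.
Proof.
case: le_directed => [[i0]] _ le_trans le_up Pev.
elim=> [|t s [j js]]; first by exists i0.
have [k kt] := Pev t; have [m [jm km]] := le_up j k.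
exists m => i mi u; rewrite inE => /predU1P[-> | us].
  exact: kt (le_trans _ _ _ km mi).
exact: js _ (le_trans _ _ _ jm mi) _ us.
Qed.

End Nets.

Lemma net_of_finite_approx (R : realType) (T : eqType) (U : Type) (Q : U -> Prop)
    (err : T -> U -> R -> Prop) :
  (forall t u e e', e <= e' -> err t u e -> err t u e') ->
  (forall (s : seq T) (e : R), 0 < e ->
     exists2 u, Q u & forall t, t \in s -> err t u e) ->
  exists (I : Type) (le : I -> I -> Prop) (f : I -> U),
    [/\ directed le, forall i, Q (f i) &
        forall t e, 0 < e -> exists i0, forall i, le i0 i -> err t (f i) e].
Proof.
move=> err_mono approx.
have approx_at (p : seq T * nat) :
    exists u, Q u /\ forall t, t \in p.1 -> err t u (p.2.+1%:R)^-1.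
  have [|u Qu pu] := approx p.1 (p.2.+1%:R)^-1; first by rewrite invr_gt0.
  by exists u.
have [f f_approx] := choice approx_at.
exists (seq T * nat)%type, (fun p q => {subset p.1 <= q.1} /\ (p.2 <= q.2)%N), f.
split=> [| p | t e e0]; first split.
- by constructor; exact: ([::], 0%N).
- by move=> p; split=> // t.
- move=> p q r [pq1 pq2] [qr1 qr2]; split; last exact: leq_trans qr2.
  by move=> t /pq1 /qr1.
- move=> p q; exists (p.1 ++ q.1, maxn p.2 q.2).
  by rewrite !leq_max !leqnn orbT; split; split=> // t tp; rewrite mem_cat tp ?orbT.
- by case: (f_approx p).
- have [n ne] : exists n : nat, (n.+1%:R)^-1 <= e.
    have e_inv : 0 <= e^-1 by rewrite invr_ge0 ltW.
    exists (Num.bound e^-1); rewrite -[X in _ <= X]invrK.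
    rewrite lef_pV2 ?posrE ?invr_gt0 ?ltr0Sn //.
    by apply/ltW/(lt_le_trans (archi_boundP e_inv)); rewrite ler_nat.
  exists ([:: t], n) => -[s m] [/= ts nm]; case: (f_approx (s, m)) => _ /= sm.
  apply: err_mono (sm t (ts t (mem_head t [::]))); apply: le_trans ne.
  by rewrite lef_pV2 ?posrE ?ltr0Sn // ler_nat.
Qed.

Section BanachAlgebra.
Variables (R : realType) (A : lmodType R[i]) (mul : A -> A -> A) (nrm : A -> R).
Hypothesis HA : banach_algebra mul nrm.

Lemma balg_norm : is_norm nrm. Proof. by case: HA => -[]. Qed.
Lemma bmulA a b c : mul a (mul b c) = mul (mul a b) c.
Proof. by case: HA => _ + _ _ _; apply. Qed.
Lemma bmulDl a b c : mul (a + b) c = mul a c + mul b c.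
Proof. by case: HA => _ _ [+ _] _ _; apply. Qed.
Lemma bmulDr a b c : mul a (b + c) = mul a b + mul a c.
Proof. by case: HA => _ _ [_ +] _ _; apply. Qed.
Lemma bmulZl k a b : mul (k *: a) b = k *: mul a b.
Proof. by case: HA => _ _ _ [+ _] _; apply. Qed.
Lemma bmulZr k a b : mul a (k *: b) = k *: mul a b.
Proof. by case: HA => _ _ _ [_ +] _; apply. Qed.
Lemma bmul_le a b : nrm (mul a b) <= nrm a * nrm b.
Proof. by case: HA => _ _ _ _; apply. Qed.

Lemma bmul0l b : mul 0 b = 0.
Proof. by rewrite -[X in mul X b](scale0r (0 : A)) bmulZl scale0r. Qed.

Lemma bmul0r a : mul a 0 = 0.
Proof. by rewrite -[X in mul a X](scale0r (0 : A)) bmulZr scale0r. Qed.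
End BanachAlgebra.

Section BanachBimodule.
Variables (R : realType) (A : lmodType R[i]) (mul : A -> A -> A) (nrm : A -> R).
Variables (X : lmodType R[i]) (nrmX : X -> R) (l : A -> X -> X) (r : X -> A -> X).
Hypothesis HX : banach_bimodule mul nrm nrmX l r.

Lemma bmod_norm : is_norm nrmX. Proof. by case: HX => -[]. Qed.
Lemma lact_linear k a x y : l a (k *: x + y) = k *: l a x + l a y.
Proof. by case: HX => _ [+ _] _ _ _; apply. Qed.
Lemma lact_linearl k a b x : l (k *: a + b) x = k *: l a x + l b x.
Proof. by case: HX => _ [_ +] _ _ _; apply. Qed.
Lemma ract_linear k a x y : r (k *: x + y) a = k *: r x a + r y a.
Proof. by case: HX => _ _ [+ _] _ _; apply. Qed.
Lemma ract_linearr k a b x : r x (k *: a + b) = k *: r x a + r x b.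
Proof. by case: HX => _ _ [_ +] _ _; apply. Qed.
Lemma lactM a b x : l (mul a b) x = l a (l b x).
Proof. by case: HX => _ _ _ [+ _ _] _; apply. Qed.
Lemma ractM a b x : r x (mul a b) = r (r x a) b.
Proof. by case: HX => _ _ _ [_ + _] _; apply. Qed.
Lemma lact_ract a b x : r (l a x) b = l a (r x b).
Proof. by case: HX => _ _ _ [_ _ +] _; apply. Qed.
Lemma lact_le a x : nrmX (l a x) <= nrm a * nrmX x.
Proof. by case: HX => _ _ _ _ [+ _]; apply. Qed.
Lemma ract_le a x : nrmX (r x a) <= nrmX x * nrm a.
Proof. by case: HX => _ _ _ _ [_ +]; apply. Qed.

Lemma lactD a x y : l a (x + y) = l a x + l a y.
Proof. by rewrite -[x]scale1r lact_linear !scale1r. Qed.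

Lemma ractD a x y : r (x + y) a = r x a + r y a.
Proof. by rewrite -[x]scale1r ract_linear !scale1r. Qed.

Lemma adD x1 x2 y1 y2 a : ad l r (x1 + x2) (y1 + y2) a = ad l r x1 y1 a + ad l r x2 y2 a.
Proof. by rewrite /ad lactD ractD opprD addrACA. Qed.
End BanachBimodule.

Definition op_mul (A : Type) (mul : A -> A -> A) : A -> A -> A := fun a b => mul b a.

Section Opposite.
Variables (R : realType) (A : lmodType R[i]) (mul : A -> A -> A) (nrm : A -> R).

Lemma banach_algebra_op : banach_algebra mul nrm -> banach_algebra (op_mul mul) nrm.
Proof.
move=> HA; split; rewrite /op_mul.
- by case: HA.
- by move=> a b c; rewrite (bmulA HA).
- by split=> a b c; rewrite ?(bmulDl HA) ?(bmulDr HA).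
- by split=> k a b; rewrite ?(bmulZl HA) ?(bmulZr HA).
- by move=> a b; rewrite mulrC (bmul_le HA).
Qed.

Section Bimodule.
Variables (X : lmodType R[i]) (nrmX : X -> R) (l : A -> X -> X) (r : X -> A -> X).

Lemma banach_bimodule_op : banach_bimodule mul nrm nrmX l r ->
  banach_bimodule (op_mul mul) nrm nrmX (fun a x => r x a) (fun x a => l a x).
Proof.
move=> HX; split; rewrite /op_mul.
- by case: HX.
- by split=> *; rewrite ?(ract_linear HX) ?(ract_linearr HX).
- by split=> *; rewrite ?(lact_linear HX) ?(lact_linearl HX).
- by split=> *; rewrite ?(ractM HX) ?(lactM HX) ?(lact_ract HX).
- by split=> a x; rewrite mulrC ?(ract_le HX) ?(lact_le HX).
Qed.

Lemma cont_dual_derivation_op (D : A -> X -> R[i]) :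
  cont_dual_derivation mul nrm nrmX l r D ->
  cont_dual_derivation (op_mul mul) nrm nrmX (fun a x => r x a) (fun x a => l a x) D.
Proof. by case=> D_dual D_lin D_der D_bnd; split=> // a b x; rewrite D_der addrC. Qed.

End Bimodule.
End Opposite.

Lemma approx_semi_amenable_op (R : realType) (A : lmodType R[i]) (mul : A -> A -> A)
    (nrm : A -> R) :
  approx_semi_amenable mul nrm -> approx_semi_amenable (op_mul mul) nrm.
Proof.
move=> HS Y nrmY lY rY HY D HD.
have [I [le [xi [eta [le_dir xe_dual D_approx]]]]] :=
  HS Y nrmY _ _ (banach_bimodule_op (mul := op_mul mul) HY) D
    (cont_dual_derivation_op (mul := op_mul mul) HD).
exists I, le, (fun i x => - eta i x), (fun i x => - xi i x); split=> //.
  by move=> i; have [xi_dual eta_dual] := xe_dual i; split; apply: in_dualN.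
move=> a e /(D_approx a) [i0 Di0]; exists i0 => i /Di0.
by congr dual_norm_le; apply: funext => x; rewrite /dual_ad /dual_lact /dual_ract; ring.
Qed.

Section DualModule.
Variables (R : realType) (A : lmodType R[i]) (mul : A -> A -> A) (nrm : A -> R).
Variables (X : lmodType R[i]) (nrmX : X -> R) (l : A -> X -> X) (r : X -> A -> X).
Hypotheses (nrm_nneg : forall a, 0 <= nrm a) (HX : banach_bimodule mul nrm nrmX l r).
Local Notation X' := (dualT nrmX).
Local Notation Xn := (bmod_norm HX).

Lemma in_dual_lact a (f : X') : in_dual nrmX (dual_lact r a f).
Proof.
apply: (in_dual_comp (K := nrm a) Xn (dfunP f)) => [k x y|x].
  exact: (ract_linear HX).
by rewrite mulrC (ract_le HX).
Qed.

Lemma in_dual_ract (f : X') a : in_dual nrmX (dual_ract l f a).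
Proof.
apply: (in_dual_comp (K := nrm a) Xn (dfunP f)) => [k x y|x].
  exact: (lact_linear HX).
exact: (lact_le HX).
Qed.

Definition dual_lmod a (f : X') : X' := DualT (in_dual_lact a f).
Definition dual_rmod (f : X') a : X' := DualT (in_dual_ract f a).

Lemma dual_bimodule : banach_bimodule mul nrm (dual_norm nrmX) dual_lmod dual_rmod.
Proof.
have f_lin (f : X') := dualf_linear (dfunP f).
split.
- exact: dual_banach Xn.
- by split=> *; apply: dual_ext => x //=; rewrite /dual_lact (ract_linearr HX) f_lin.
- by split=> *; apply: dual_ext => x //=; rewrite /dual_ract (lact_linearl HX) f_lin.
- split=> *; apply: dual_ext => x /=; rewrite /dual_lact /dual_ract /=.
  + by rewrite (ractM HX).
  + by rewrite (lactM HX).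
  + by rewrite (lact_ract HX).
- split=> a f; (apply: (dual_norm_min Xn);
    first by rewrite mulr_ge0 ?nrm_nneg ?(dual_norm_ge0 Xn));
    apply/dual_norm_leP => x; apply: le_trans (normc_dual_le Xn f _) _.
  + rewrite [nrm a * _]mulrC -mulrA ler_wpM2l ?(dual_norm_ge0 Xn) //.
    by rewrite mulrC (ract_le HX).
  + by rewrite -mulrA ler_wpM2l ?(dual_norm_ge0 Xn) ?(lact_le HX).
Qed.

End DualModule.

Lemma left_regular_bimodule (R : realType) (A : lmodType R[i]) (mul : A -> A -> A)
    (nrm : A -> R) :
  banach_algebra mul nrm -> banach_bimodule mul nrm nrm mul (fun _ _ => 0).
Proof.
move=> HA; have An := balg_norm HA; split.
- by case: HA.
- by split=> *; rewrite ?(bmulDr HA) ?(bmulZr HA) ?(bmulDl HA) ?(bmulZl HA).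
- by split=> *; rewrite scaler0 addr0.
- by split=> *; rewrite ?(bmulA HA) ?(bmul0r HA).
- split=> a x; first exact: (bmul_le HA).
  by rewrite (nrm0 An) mulr_ge0 ?(nrm_ge0 An).
Qed.

Section BidualRightIdentity.
Variables (R : realType) (A : lmodType R[i]) (mul : A -> A -> A) (nrm : A -> R).
Hypotheses (HA : banach_algebra mul nrm) (HS : approx_semi_amenable mul nrm).
Local Notation An := (balg_norm HA).
Local Notation HAreg := (left_regular_bimodule HA).
Local Notation A' := (dualT nrm).

Lemma eval_dual_derivation : cont_dual_derivation mul nrm (dual_norm nrm)
  (dual_lmod HAreg) (dual_rmod HAreg) (fun a (g : A') => g a).
Proof.
split.
- move=> a; apply: (bounded_in_dual (M := nrm a)) => [k f g|g] //.
  by rewrite mulrC (normc_dual_le An).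
- by move=> k a b g; rewrite (dualf_linear (dfunP g)).
- by move=> a b g; rewrite /dual_lact /dual_ract /= /dual_lact /dual_ract (dualf0 (dfunP g)) addr0.
- exists 1 => a; apply/dual_norm_leP => g.
  by rewrite mul1r mulrC (normc_dual_le An).
Qed.

Lemma bidual_right_identity (s : seq A) (e : R) : 0 < e ->
  exists2 F : A' -> R[i], in_dual (dual_norm nrm) F &
    forall a, a \in s -> forall g : A',
      normc (g a - F (dual_rmod HAreg g a)) <= e * dual_norm nrm g.
Proof.
move=> e0.
have [I [le [xi [eta [le_dir xe_dual D_approx]]]]] :=
  HS (dual_bimodule (nrm_ge0 An) HAreg) eval_dual_derivation.
have [i0 i0_approx] := eventually_all le_dir (fun a => D_approx a e e0) s.
have [xi_dual eta_dual] := xe_dual i0.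
exists (xi i0) => // a sa g.
have /dual_norm_leP/(_ g) := i0_approx i0 (directed_refl le_dir i0) a sa.
rewrite /dual_ad /dual_lact /dual_ract (_ : dual_lmod HAreg a g = 0).
  by rewrite (dualf0 eta_dual) subr0.
by apply: dual_ext => y; apply: (dualf0 (dfunP g)).
Qed.

End BidualRightIdentity.

Section RightExtension.
Variables (R : realType) (A : lmodType R[i]) (mul : A -> A -> A) (nrm : A -> R).
Variables (X : lmodType R[i]) (nrmX : X -> R) (l : A -> X -> X) (r : X -> A -> X).
Hypotheses (HA : banach_algebra mul nrm) (HS : approx_semi_amenable mul nrm).
Hypothesis HX : banach_bimodule mul nrm nrmX l r.

Lemma right_extension (xi : X -> R[i]) (s : seq A) (e : R) :
  in_dual nrmX xi -> 0 < e ->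
  exists Xi : X -> R[i], [/\ in_dual nrmX Xi,
    forall a, a \in s -> forall x, normc (xi (r x a) - Xi (r x a)) <= e * nrmX x &
    forall x, (forall a, xi (r x a) = 0) -> Xi x = 0].
Proof.
move=> xi_dual e0.
have An := balg_norm HA; have Xn := bmod_norm HX.
have [M M0 xiM] := in_dual_bound Xn xi_dual.
have g_dual x : in_dual nrm (fun a => xi (r x a)).
  apply: (in_dual_comp (K := nrmX x) Xn xi_dual) => [k a b|a].
    exact: (ract_linearr HX).
  exact: (ract_le HX).
pose g x : dualT nrm := DualT (g_dual x).
have g_le x : dual_norm nrm (g x) <= M * nrmX x.
  apply: (dual_norm_min An); first by rewrite mulr_ge0 ?(nrm_ge0 Xn).
  apply/dual_norm_leP => a /=; apply: le_trans (xiM _) _.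
  by rewrite -mulrA ler_wpM2l // (ract_le HX).
have e' : 0 < e / (M + 1) by rewrite divr_gt0 ?ltr_wpDl.
have [F F_dual F_approx] := bidual_right_identity HA HS s e'.
have [MF MF0 FM] := in_dual_bound (dual_norm_is_norm An) F_dual.
exists (fun x => F (g x)); split.
- apply: (bounded_in_dual (M := MF * M)) => [k x y|x].
    rewrite -(dualf_linear F_dual); congr F; apply: dual_ext => a /=.
    by rewrite (ract_linear HX) (dualf_linear xi_dual).
  by apply: le_trans (FM _) _; rewrite -mulrA ler_wpM2l.
- move=> a sa x /=.
  have -> : g (r x a) = dual_rmod (left_regular_bimodule HA) (g x) a.
    by apply: dual_ext => b /=; rewrite /dual_ract /= (ractM HX).
  apply: le_trans (F_approx a sa (g x)) _.
  apply: le_trans (ler_wpM2l (ltW e') (g_le x)) _.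
  rewrite mulrA ler_wpM2r ?(nrm_ge0 Xn) // mulrAC ler_pdivrMr ?ltr_wpDl //.
  by rewrite ler_pM2l // lerDl.
- move=> x xi0; have -> : g x = 0 by apply: dual_ext => a /=; rewrite xi0.
  exact: (dualf0 F_dual).
Qed.

End RightExtension.

Lemma left_extension (R : realType) (A : lmodType R[i]) (mul : A -> A -> A)
    (nrm : A -> R) (X : lmodType R[i]) (nrmX : X -> R) (l : A -> X -> X)
    (r : X -> A -> X) (eta : X -> R[i]) (s : seq A) (e : R) :
  banach_algebra mul nrm -> approx_semi_amenable mul nrm ->
  banach_bimodule mul nrm nrmX l r -> in_dual nrmX eta -> 0 < e ->
  exists H : X -> R[i], [/\ in_dual nrmX H,
    forall a, a \in s -> forall x, normc (eta (l a x) - H (l a x)) <= e * nrmX x &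
    forall x, (forall a, eta (l a x) = 0) -> H x = 0].
Proof.
move=> HA HS HX; apply: (right_extension (banach_algebra_op HA)).
- exact: approx_semi_amenable_op.
- exact: (banach_bimodule_op HX).
Qed.

Section IdealEmbedding.
Variables (R : realType) (A C : lmodType R[i]).
Variables (mulA : A -> A -> A) (nrmA : A -> R) (mulC : C -> C -> C) (nrmC : C -> R).

Definition ideal_embedding (j : A -> C) (p : C -> A) : Prop :=
  [/\ forall (k : R[i]) a b, j (k *: a + b) = k *: j a + j b,
      forall a, nrmC (j a) = nrmA a,
      forall a, p (j a) = a,
      forall c a, mulC c (j a) = j (mulA (p c) a) &
      forall c a, mulC (j a) c = j (mulA a (p c))].

Variables (j : A -> C) (p : C -> A).
Hypothesis Hj : ideal_embedding j p.

Lemma emb_linear k a b : j (k *: a + b) = k *: j a + j b. Proof. by case: Hj. Qed.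
Lemma emb_norm a : nrmC (j a) = nrmA a. Proof. by case: Hj. Qed.
Lemma embK a : p (j a) = a. Proof. by case: Hj. Qed.
Lemma mul_emb c a : mulC c (j a) = j (mulA (p c) a). Proof. by case: Hj. Qed.
Lemma emb_mul a c : mulC (j a) c = j (mulA a (p c)). Proof. by case: Hj. Qed.

Lemma emb_mulM a b : mulC (j a) (j b) = j (mulA a b).
Proof. by rewrite mul_emb embK. Qed.

Variables (X : lmodType R[i]) (nrmX : X -> R) (l : C -> X -> X) (r : X -> C -> X).

Lemma bimodule_restrict : banach_bimodule mulC nrmC nrmX l r ->
  banach_bimodule mulA nrmA nrmX (fun a => l (j a)) (fun x a => r x (j a)).
Proof.
move=> HX; split.
- by case: HX.
- by split=> *; rewrite ?emb_linear ?(lact_linear HX) ?(lact_linearl HX).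
- by split=> *; rewrite ?emb_linear ?(ract_linear HX) ?(ract_linearr HX).
- by split=> *; rewrite -?emb_mulM ?(lactM HX) ?(ractM HX) ?(lact_ract HX).
- by split=> *; rewrite -emb_norm ?(lact_le HX) ?(ract_le HX).
Qed.

Lemma dual_derivation_restrict (D : C -> X -> R[i]) :
  cont_dual_derivation mulC nrmC nrmX l r D ->
  cont_dual_derivation mulA nrmA nrmX (fun a => l (j a)) (fun x a => r x (j a))
    (fun a => D (j a)).
Proof.
case=> D_dual D_lin D_der [M DM]; split=> //.
- by move=> k a b x; rewrite emb_linear D_lin.
- by move=> a b x; rewrite -emb_mulM D_der.
- by exists M => a; rewrite -emb_norm.
Qed.

Lemma derivation_restrict (D : C -> X) :
  cont_derivation mulC nrmC nrmX l r D ->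
  cont_derivation mulA nrmA nrmX (fun a => l (j a)) (fun x a => r x (j a))
    (fun a => D (j a)).
Proof.
case=> D_lin D_der [M DM]; split.
- by move=> k a b; rewrite emb_linear D_lin.
- by move=> a b; rewrite -emb_mulM D_der.
- by exists M => a; rewrite -emb_norm.
Qed.

End IdealEmbedding.

Section DirectSum.
Variables (R : realType) (A B : lmodType R[i]).
Variables (mulA : A -> A -> A) (nrmA : A -> R) (mulB : B -> B -> B) (nrmB : B -> R).
Hypotheses (HA : banach_algebra mulA nrmA) (HB : banach_algebra mulB nrmB).

Lemma dsum_split (c : A * B) : c = (c.1, 0) + (0, c.2).
Proof. by case: c => a b; congr pair; rewrite /= ?addr0 ?add0r. Qed.

Lemma ideal_embedding_fst : ideal_embedding mulA nrmA (dsum_mul mulA mulB)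
  (dsum_norm nrmA nrmB) (fun a => (a, 0)) fst.
Proof.
split=> [k a b|a|a|c a|c a] //.
- by congr pair; rewrite /= scaler0 addr0.
- by rewrite /dsum_norm /= (nrm0 (balg_norm HB)) addr0.
- by rewrite /dsum_mul /= (bmul0r HB).
- by rewrite /dsum_mul /= (bmul0l HB).
Qed.

Lemma ideal_embedding_snd : ideal_embedding mulB nrmB (dsum_mul mulA mulB)
  (dsum_norm nrmA nrmB) (fun b => (0, b)) snd.
Proof.
split=> [k a b|a|a|c a|c a] //.
- by congr pair; rewrite /= scaler0 addr0.
- by rewrite /dsum_norm /= (nrm0 (balg_norm HA)) add0r.
- by rewrite /dsum_mul /= (bmul0r HA).
- by rewrite /dsum_mul /= (bmul0l HA).
Qed.

End DirectSum.

Section DualSummand.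
Variables (R : realType) (A C : lmodType R[i]).
Variables (mulA : A -> A -> A) (nrmA : A -> R) (mulC : C -> C -> C) (nrmC : C -> R).
Variables (j : A -> C) (p : C -> A).
Hypotheses (HA : banach_algebra mulA nrmA) (HS : approx_semi_amenable mulA nrmA).
Hypothesis Hj : ideal_embedding mulA nrmA mulC nrmC j p.
Variables (X : lmodType R[i]) (nrmX : X -> R) (l : C -> X -> X) (r : X -> C -> X).
Hypothesis HX : banach_bimodule mulC nrmC nrmX l r.
Variable D : C -> X -> R[i].
Hypothesis HD : cont_dual_derivation mulC nrmC nrmX l r D.

Lemma ract_emb_proj x c a : r (r x c) (j a) = r (r x (j (p c))) (j a).
Proof. by rewrite -!(ractM HX) (mul_emb Hj) (emb_mulM Hj). Qed.

Lemma lact_emb_proj x c a : l (j a) (l c x) = l (j a) (l (j (p c)) x).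
Proof. by rewrite -!(lactM HX) (emb_mul Hj) (emb_mulM Hj). Qed.

Lemma dual_approx_summand (s : seq C) (e : R) : 0 < e ->
  exists xi eta : X -> R[i], [/\ in_dual nrmX xi, in_dual nrmX eta &
    forall c, c \in s ->
      dual_norm_le nrmX (fun x => D (j (p c)) x - dual_ad l r xi eta c x) e].
Proof.
move=> e0; have Xn := bmod_norm HX; have HXA := bimodule_restrict Hj HX.
have e3 : 0 < e / 3%:R by rewrite divr_gt0.
have [I [le [xi [eta [le_dir xe_dual D_approx]]]]] :=
  HS HXA (dual_derivation_restrict Hj HD).
have [i0 i0_approx] := eventually_all le_dir (fun a => D_approx a _ e3) (map p s).
have [xi_dual eta_dual] := xe_dual i0.
have [Xi [Xi_dual Xi_approx Xi0]] := right_extension HA HS HXA (map p s) xi_dual e3.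
have [H [H_dual H_approx H0]] := left_extension (map p s) HA HS HXA eta_dual e3.
exists Xi, H; split=> // c sc; have spc := map_f p sc.
have Xi_proj x : Xi (r x c) = Xi (r x (j (p c))).
  apply/eqP; rewrite -subr_eq0 -(dualfB Xi_dual); apply/eqP; apply: Xi0 => a.
  rewrite -scaleN1r addrC (ract_linear HX) scaleN1r addrC ract_emb_proj subrr.
  exact: (dualf0 xi_dual).
have H_proj x : H (l c x) = H (l (j (p c)) x).
  apply/eqP; rewrite -subr_eq0 -(dualfB H_dual); apply/eqP; apply: H0 => a.
  rewrite -scaleN1r addrC (lact_linear HX) scaleN1r addrC lact_emb_proj subrr.
  exact: (dualf0 eta_dual).
apply/dual_norm_leP => x; rewrite /dual_ad /dual_lact /dual_ract Xi_proj H_proj.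
have /dual_norm_leP/(_ x) := i0_approx i0 (directed_refl le_dir i0) _ spc.
have := Xi_approx _ spc x; have := H_approx _ spc x.
rewrite /dual_ad /dual_lact /dual_ract.
set u := D _ x; set a := xi i0 _; set b := eta i0 _; set a' := Xi _; set b' := H _.
move=> bb' aa' uab.
have -> : u - (a' - b') = (u - (a - b)) + (a - a') - (b - b') by ring.
apply: le_trans (normcB _ _) _; apply: le_trans (lerD (le_normcD _ _) (lexx _)) _.
lra.
Qed.

End DualSummand.

Section DirectSumSemiAmenable.
Variables (R : realType) (A B : lmodType R[i]).
Variables (mulA : A -> A -> A) (nrmA : A -> R) (mulB : B -> B -> B) (nrmB : B -> R).
Hypotheses (HA : banach_algebra mulA nrmA) (HB : banach_algebra mulB nrmB).
Local Notation mulC := (dsum_mul mulA mulB).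
Local Notation nrmC := (dsum_norm nrmA nrmB).

Lemma dsum_approx_semi_amenable :
  approx_semi_amenable mulA nrmA -> approx_semi_amenable mulB nrmB ->
  approx_semi_amenable mulC nrmC.
Proof.
move=> HSA HSB X nrmX l r HX D HD; have Xn := bmod_norm HX.
have D_split c x : D c x = D (c.1, 0) x + D (0, c.2) x.
  case: HD => _ D_lin _ _.
  by have := D_lin 1 (c.1, 0) (0, c.2) x; rewrite scale1r mul1r -dsum_split.
have [|I [le [f [le_dir f_dual f_approx]]]] := net_of_finite_approx
  (Q := fun u : (X -> R[i]) * (X -> R[i]) => in_dual nrmX u.1 /\ in_dual nrmX u.2)
  (err := fun c u e => dual_norm_le nrmX (fun x => D c x - dual_ad l r u.1 u.2 c x) e)
  (fun c u e e' => @dual_norm_le_trans _ _ _ Xn _ e e').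
  move=> s e e0; have e2 : 0 < e / 2 by rewrite divr_gt0.
  have [xiA [etaA [xiA_dual etaA_dual DA]]] :=
    dual_approx_summand HA HSA (ideal_embedding_fst mulA nrmA HB) HX HD s e2.
  have [xiB [etaB [xiB_dual etaB_dual DB]]] :=
    dual_approx_summand HB HSB (ideal_embedding_snd mulB nrmB HA) HX HD s e2.
  exists (fun x => xiA x + xiB x, fun x => etaA x + etaB x).
    by split; apply: in_dualD.
  move=> c sc; apply/dual_norm_leP => x /=.
  have /dual_norm_leP/(_ x) := DA c sc; have /dual_norm_leP/(_ x) := DB c sc.
  rewrite /dual_ad /dual_lact /dual_ract /= => DBx DAx; rewrite D_split.
  set dA := D (c.1, 0) x - _ in DAx; set dB := D (0, c.2) x - _ in DBx.
  have -> : D (c.1, 0) x + D (0, c.2) x - (xiA (r x c) + xiB (r x c)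
      - (etaA (l c x) + etaB (l c x))) = dA + dB by rewrite /dA /dB; ring.
  by apply: le_trans (le_normcD _ _) _; lra.
by exists I, le, (fun i => (f i).1), (fun i => (f i).2); split.
Qed.

End DirectSumSemiAmenable.

Section BoundedSummand.
Variables (R : realType) (A C : lmodType R[i]).
Variables (mulA : A -> A -> A) (nrmA : A -> R) (mulC : C -> C -> C) (nrmC : C -> R).
Variables (j : A -> C) (p : C -> A).
Hypotheses (HA : banach_algebra mulA nrmA) (Hj : ideal_embedding mulA nrmA mulC nrmC j p).
Hypothesis HcA : central_mb_approx_identity mulA nrmA.
Variables (Y : lmodType R[i]) (nrmY : Y -> R) (l : C -> Y -> Y) (r : Y -> C -> Y).
Hypothesis HY : banach_bimodule mulC nrmC nrmY l r.
Variable D : C -> Y.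
Hypothesis HD : cont_derivation mulC nrmC nrmY l r D.
Hypothesis D_inner : bdd_approx_semi_inner nrmA nrmY
  (fun a => l (j a)) (fun y a => r y (j a)) (fun a => D (j a)).

Lemma ad_central_shift (u : A) (xi eta : Y) c : (forall a, mulA u a = mulA a u) ->
  ad l r (l (j u) xi) (r eta (j u)) c
  = ad (fun a => l (j a)) (fun y a => r y (j a)) xi eta (mulA (p c) u).
Proof.
move=> u_central; rewrite /ad -(lactM HY) -(ractM HY).
by rewrite (mul_emb Hj) (emb_mul Hj) u_central.
Qed.

Lemma D_embB a b : D (j a) - D (j b) = D (j (a - b)).
Proof.
case: HD => D_lin _ _.
by rewrite [a - b]addrC -[- b]scaleN1r (emb_linear Hj) D_lin scaleN1r addrC.
Qed.

Lemma bdd_approx_summand : exists2 M, 0 <= M & forall (s : seq C) (e : R), 0 < e ->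
  exists xi eta : Y, (forall c, nrmY (ad l r xi eta c) <= M * nrmA (p c)) /\
    forall c, c \in s -> nrmY (D (j (p c)) - ad l r xi eta c) <= e.
Proof.
have An := balg_norm HA; have Yn := bmod_norm HY.
have [I [le [xi [eta [le_dir D_approx [MA adM]]]]]] := D_inner.
have [J [leJ [u [leJ_dir u_central u_approx [K uK]]]]] := HcA.
have [MD DM] : exists MD, forall c, nrmY (D c) <= MD * nrmC c by case: HD.
exists (`|MA| * `|K|); first by rewrite mulr_ge0 ?nrm_nneg.
move=> s e e0.
have e2 : 0 < e / 2 by rewrite divr_gt0.
have eD : 0 < e / 2 / (`|MD| + 1) by rewrite divr_gt0 // ltr_wpDl.
have [j0 j0_approx] := eventually_all leJ_dir (fun a => u_approx a _ eD) (map p s).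
pose pu c := mulA (p c) (u j0).
have [i0 i0_approx] := eventually_all le_dir (fun a => D_approx a _ e2) (map pu s).
exists (l (j (u j0)) (xi i0)), (r (eta i0) (j (u j0))).
split=> [c|c sc]; rewrite ad_central_shift //.
- have pu_le : nrmA (pu c) <= `|K| * nrmA (p c).
    rewrite /pu -u_central; apply: le_trans (uK _ _) _.
    by rewrite ler_wpM2r ?(nrm_ge0 An) ?ler_norm.
  apply: le_trans (adM i0 _) _; rewrite -mulrA.
  apply: le_trans (ler_wpM2r (nrm_ge0 An _) (ler_norm MA)) _.
  by rewrite ler_wpM2l.
- rewrite -[D (j (p c))](subrK (D (j (pu c)))) -addrA.
  apply: le_trans (nrmD Yn _ _) _; rewrite [e]splitr; apply: lerD; last first.
    exact/ltW/(i0_approx i0 (directed_refl le_dir i0) _ (map_f pu sc)).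
  rewrite D_embB; apply: le_trans (DM _) _; rewrite (emb_norm Hj).
  have := j0_approx j0 (directed_refl leJ_dir j0) _ (map_f p sc).
  rewrite u_central -(nrmN An) opprB => pu_near.
  apply: le_trans (ler_wpM2r (nrm_ge0 An _) (ler_norm MD)) _.
  apply: le_trans (ler_wpM2l (normr_ge0 MD) (ltW pu_near)) _.
  rewrite mulrCA ger_pMr // ler_pdivrMr ?ltr_wpDl // mul1r.
  by rewrite lerDl.
Qed.

End BoundedSummand.

Section DualDerivation.
Variables (R : realType) (A : lmodType R[i]) (mul : A -> A -> A) (nrm : A -> R).
Variables (X : lmodType R[i]) (nrmX : X -> R) (l : A -> X -> X) (r : X -> A -> X).
Hypotheses (nrm_nneg : forall a, 0 <= nrm a) (HX : banach_bimodule mul nrm nrmX l r).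
Local Notation Xn := (bmod_norm HX).

Lemma dual_adE (xi eta : dualT nrmX) a x :
  ad (dual_lmod HX) (dual_rmod HX) xi eta a x = dual_ad l r xi eta a x.
Proof. by []. Qed.

Lemma dual_bdd_approx_semi_innerP (D : A -> dualT nrmX) :
  dual_bdd_approx_semi_inner nrm nrmX l r (fun a => D a) <->
  bdd_approx_semi_inner nrm (dual_norm nrmX) (dual_lmod HX) (dual_rmod HX) D.
Proof.
split.
- case=> I [le [xi [eta [le_dir xe_dual D_approx [M adM]]]]].
  exists I, le, (fun i => DualT (xe_dual i).1), (fun i => DualT (xe_dual i).2).
  split=> // [a e e0|].
  + have [i0 i0_approx] := D_approx a _ (divr_gt0 e0 (ltr0Sn _ 1)).
    exists i0 => i /i0_approx D_le.
    apply: (@le_lt_trans _ _ (e / 2)); last by rewrite ltr_pdivrMr // ltr_pMr // ltr1n.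
    by apply: (dual_norm_min Xn); rewrite ?ltW ?divr_gt0.
  + exists `|M| => i a; apply: (dual_norm_min Xn); first by rewrite mulr_ge0 ?nrm_nneg.
    apply/dual_norm_leP => x; rewrite dual_adE.
    have /dual_norm_leP/(_ x) adM_x := adM i a; apply: le_trans adM_x _.
    apply: ler_wpM2r; first exact: (nrm_ge0 Xn).
    by apply: ler_wpM2r; rewrite ?nrm_nneg ?ler_norm.
- case=> I [le [xi [eta [le_dir D_approx [M adM]]]]].
  exists I, le, (fun i => xi i : X -> R[i]), (fun i => eta i : X -> R[i]).
  split=> // [i|a e e0|]; first by split; apply: dfunP.
  + have [i0 i0_approx] := D_approx a e e0; exists i0 => i /i0_approx /ltW D_le.
    apply/dual_norm_leP => x; rewrite -dual_adE -dualEB.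
    by apply: le_trans (normc_dual_le Xn _ x) _; rewrite ler_wpM2r ?(nrm_ge0 Xn).
  + exists M => i a; apply/dual_norm_leP => x; rewrite -dual_adE.
    by apply: le_trans (normc_dual_le Xn _ x) _; rewrite ler_wpM2r ?(nrm_ge0 Xn).
Qed.

Lemma dual_derivation_in_dual (D : A -> X -> R[i]) :
  cont_dual_derivation mul nrm nrmX l r D -> forall a, in_dual nrmX (D a).
Proof. by case. Qed.

Lemma dual_derivation_to_dual (D : A -> X -> R[i])
    (HD : cont_dual_derivation mul nrm nrmX l r D) :
  cont_derivation mul nrm (dual_norm nrmX) (dual_lmod HX) (dual_rmod HX)
    (fun a => DualT (dual_derivation_in_dual HD a)).
Proof.
have [_ D_lin D_der [M DM]] := HD; split.
- by move=> k a b; apply: dual_ext => x /=; rewrite D_lin.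
- by move=> a b; apply: dual_ext => x /=; rewrite D_der.
- exists `|M| => a; apply: (dual_norm_min Xn); first by rewrite mulr_ge0 ?nrm_nneg.
  apply/dual_norm_leP => x /=; have /dual_norm_leP/(_ x) DMx := DM a.
  apply: le_trans DMx _; apply: ler_wpM2r; first exact: (nrm_ge0 Xn).
  by apply: ler_wpM2r; rewrite ?nrm_nneg ?ler_norm.
Qed.

End DualDerivation.

Lemma restrict_dual_bdd_approx_semi_inner (R : realType) (A C : lmodType R[i])
    (mulA : A -> A -> A) (nrmA : A -> R) (mulC : C -> C -> C) (nrmC : C -> R)
    (j : A -> C) (p : C -> A) (X : lmodType R[i]) (nrmX : X -> R)
    (l : C -> X -> X) (r : X -> C -> X) (D : C -> X -> R[i])
    (Hj : ideal_embedding mulA nrmA mulC nrmC j p)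
    (HX : banach_bimodule mulC nrmC nrmX l r)
    (HD : cont_dual_derivation mulC nrmC nrmX l r D) :
  (forall a, 0 <= nrmA a) -> bdd_approx_semi_amenable mulA nrmA ->
  bdd_approx_semi_inner nrmA (dual_norm nrmX) (fun a => dual_lmod HX (j a))
    (fun f a => dual_rmod HX f (j a))
    (fun a => DualT (dual_derivation_in_dual HD (j a))).
Proof.
move=> A_nneg HSA; have HXA := bimodule_restrict Hj HX.
have := HSA _ _ _ _ HXA _ (dual_derivation_restrict Hj HD).
move/(dual_bdd_approx_semi_innerP A_nneg HXA
  (fun a => DualT (dual_derivation_in_dual HD (j a)))).
have -> : dual_lmod HXA = fun a f => dual_lmod HX (j a) f.
  by apply: funext => a; apply: funext => f; apply: dual_ext.
have -> : dual_rmod HXA = fun f a => dual_rmod HX f (j a).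
  by apply: funext => f; apply: funext => a; apply: dual_ext.
by [].
Qed.

Section DirectSumBounded.
Variables (R : realType) (A B : lmodType R[i]).
Variables (mulA : A -> A -> A) (nrmA : A -> R) (mulB : B -> B -> B) (nrmB : B -> R).
Hypotheses (HA : banach_algebra mulA nrmA) (HB : banach_algebra mulB nrmB).
Hypotheses (HcA : central_mb_approx_identity mulA nrmA)
           (HcB : central_mb_approx_identity mulB nrmB).
Local Notation mulC := (dsum_mul mulA mulB).
Local Notation nrmC := (dsum_norm nrmA nrmB).
Local Notation HjA := (ideal_embedding_fst mulA nrmA HB).
Local Notation HjB := (ideal_embedding_snd mulB nrmB HA).

Lemma dsum_bdd_approx_semi_inner (Y : lmodType R[i]) (nrmY : Y -> R)
    (l : A * B -> Y -> Y) (r : Y -> A * B -> Y) (D : A * B -> Y) :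
  banach_bimodule mulC nrmC nrmY l r -> cont_derivation mulC nrmC nrmY l r D ->
  bdd_approx_semi_inner nrmA nrmY (fun a => l (a, 0)) (fun y a => r y (a, 0))
    (fun a => D (a, 0)) ->
  bdd_approx_semi_inner nrmB nrmY (fun b => l (0, b)) (fun y b => r y (0, b))
    (fun b => D (0, b)) ->
  bdd_approx_semi_inner nrmC nrmY l r D.
Proof.
move=> HY HD DA_inner DB_inner; have Yn := bmod_norm HY.
have [MA MA0 DA] := bdd_approx_summand HA HjA HcA HY HD DA_inner.
have [MB MB0 DB] := bdd_approx_summand HB HjB HcB HY HD DB_inner.
have D_split c : D c = D (c.1, 0) + D (0, c.2).
  case: HD => D_lin _ _.
  by have := D_lin 1 (c.1, 0) (0, c.2); rewrite !scale1r -dsum_split.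
have [|I [le [f [le_dir f_bnd f_approx]]]] := net_of_finite_approx
  (Q := fun u : Y * Y => forall c, nrmY (ad l r u.1 u.2 c) <= (MA + MB) * nrmC c)
  (err := fun c u e => nrmY (D c - ad l r u.1 u.2 c) < e)
  (fun c u e e' ee' Du => lt_le_trans Du ee').
  move=> s e e0; have e3 : 0 < e / 3%:R by rewrite divr_gt0.
  have [xiA [etaA [adA DAs]]] := DA s _ e3.
  have [xiB [etaB [adB DBs]]] := DB s _ e3.
  exists (xiA + xiB, etaA + etaB) => /= [c | c sc]; rewrite (adD HY).
    apply: le_trans (nrmD Yn _ _) _; have := adA c; have := adB c.
    have := nrm_ge0 (balg_norm HA) c.1; have := nrm_ge0 (balg_norm HB) c.2.
    rewrite /dsum_norm /=; nra.
  rewrite D_split opprD addrACA; apply: le_lt_trans (nrmD Yn _ _) _.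
  have := DAs c sc; have := DBs c sc; rewrite /=; lra.
exists I, le, (fun i => (f i).1), (fun i => (f i).2); split=> //.
by exists (MA + MB).
Qed.

Lemma dsum_bdd_approx_semi_contractible :
  bdd_approx_semi_contractible mulA nrmA -> bdd_approx_semi_contractible mulB nrmB ->
  bdd_approx_semi_contractible mulC nrmC.
Proof.
move=> HSA HSB Y nrmY l r HY D HD.
apply: dsum_bdd_approx_semi_inner => //.
- exact: HSA _ _ _ _ (bimodule_restrict HjA HY) _ (derivation_restrict HjA HD).
- exact: HSB _ _ _ _ (bimodule_restrict HjB HY) _ (derivation_restrict HjB HD).
Qed.

Lemma dsum_bdd_approx_semi_amenable :
  bdd_approx_semi_amenable mulA nrmA -> bdd_approx_semi_amenable mulB nrmB ->
  bdd_approx_semi_amenable mulC nrmC.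
Proof.
move=> HSA HSB X nrmX l r HX D HD.
have An := balg_norm HA; have Bn := balg_norm HB.
have C_nneg c : 0 <= nrmC c by rewrite addr_ge0 ?(nrm_ge0 An) ?(nrm_ge0 Bn).
pose D' c := DualT (dual_derivation_in_dual HD c).
apply/(dual_bdd_approx_semi_innerP C_nneg HX D').
apply: (dsum_bdd_approx_semi_inner (dual_bimodule C_nneg HX)
  (dual_derivation_to_dual C_nneg HX HD)).
- exact: restrict_dual_bdd_approx_semi_inner HjA HX HD (nrm_ge0 An) HSA.
- exact: restrict_dual_bdd_approx_semi_inner HjB HX HD (nrm_ge0 Bn) HSB.
Qed.

End DirectSumBounded.

Theorem theorem5p1 (R : realType) :
  (forall (A B : lmodType R[i]) (mulA : A -> A -> A) (nrmA : A -> R)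
          (mulB : B -> B -> B) (nrmB : B -> R),
      banach_algebra mulA nrmA -> banach_algebra mulB nrmB ->
      approx_semi_amenable mulA nrmA -> approx_semi_amenable mulB nrmB ->
      approx_semi_amenable (dsum_mul mulA mulB) (dsum_norm nrmA nrmB)) /\
  (forall (A B : lmodType R[i]) (mulA : A -> A -> A) (nrmA : A -> R)
          (mulB : B -> B -> B) (nrmB : B -> R),
      banach_algebra mulA nrmA -> banach_algebra mulB nrmB ->
      central_mb_approx_identity mulA nrmA -> central_mb_approx_identity mulB nrmB ->
      (bdd_approx_semi_amenable mulA nrmA -> bdd_approx_semi_amenable mulB nrmB ->
       bdd_approx_semi_amenable (dsum_mul mulA mulB) (dsum_norm nrmA nrmB)) /\
      (bdd_approx_semi_contractible mulA nrmA -> bdd_approx_semi_contractible mulB nrmB ->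
       bdd_approx_semi_contractible (dsum_mul mulA mulB) (dsum_norm nrmA nrmB))).
Proof.
split=> A B mulA nrmA mulB nrmB HA HB.
- exact: dsum_approx_semi_amenable.
- move=> HcA HcB; split.
  + exact: dsum_bdd_approx_semi_amenable.
  + exact: dsum_bdd_approx_semi_contractible.
Qed.
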